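(* Let $0<\kappa_p<\kappa_s$ and $0<R'<R$. Then for all sufficiently large $n$ and $j=1,2$, \[ \Big|\frac{h_n^{(j)}(\kappa_pR)}{h_n^{(j)}(\kappa_pR')}-\frac{h_n^{(j)}(\kappa_sR)}{h_n^{(j)}(\kappa_sR')}\Big|\le\frac{14}{3}\,\frac{\kappa_s(\kappa_s-\kappa_p)}{n}\,R(R-R')\Big(\frac{R'}{R}\Big)^{n+1}. \]
   Context: $h_n^{(1)}$ and $h_n^{(2)}$ denote the spherical Hankel functions of the first and second kind of order $n$ (for real arguments $h_n^{(2)}=\overline{h_n^{(1)}}$). *)

From Stdlib Require Import Reals.
From Coquelicot Require Import Coquelicot.
Open Scope R_scope.

Definition cexpi (x : R) : Complex.C := (cos x, sin x).

(* Spherical Hankel function of the first kind, order n, real argument x > 0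
   (DLMF 10.49.6, explicit finite form):
   h_n^(1)(x) = (-i)^(n+1) e^{ix}/x * sum_{k=0}^n i^k (n+k)! / (k! (n-k)! (2x)^k). *)
Definition sph_hankel1 (n : nat) (x : R) : Complex.C :=
  Cmult (Cmult (Cpow (Copp Ci) (S n)) (Cmult (cexpi x) (RtoC (/ x))))
    (sum_n (fun k : nat =>
       Cmult (Cpow Ci k)
         (RtoC (INR (Factorial.fact (n + k)) /
                (INR (Factorial.fact k) * INR (Factorial.fact (n - k)) * (2 * x) ^ k)))) n).

(* Second kind: for real arguments h_n^(2) = conj h_n^(1). *)
Definition sph_hankel2 (n : nat) (x : R) : Complex.C := Cconj (sph_hankel1 n x).

Definition sph_hankel (j : nat) (n : nat) (x : R) : Complex.C :=
  if Nat.eqb j 1 then sph_hankel1 n x else sph_hankel2 n x.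

From Stdlib Require Import Reals Lra Lia Factorial.
From Coquelicot Require Import Coquelicot.
Open Scope R_scope.

(* For x > 0 the explicit finite form of h_n^(1) reads
     h_n^(1)(x) = (-i)^(n+1) x^(-(n+1)) e^(ix) P_n(x),
     P_n(t) = sum_k i^k alpha(n,k) t^(n-k),  alpha(n,k) = (n+k)!/(k!(n-k)! 2^k).
   Normalising by P_n(0) = i^n alpha(n,n) gives F_n(t) = e^(it) P_n(t)/P_n(0),
   with F_n(0) = 1, F_0(t) = e^(it) and, from the recurrences of alpha, the
   differential recursion F_(n+1)'(t) = t/(2n+1) F_n(t).  The mean-value
   inequality then yields a bound |F_n| <= B on [-X, X] uniform in n, and the
   expansion F_n(t) = 1 + t^2/(2(2n-1)) + O(1/n^2).

   Since h_n^(1)(a)/h_n^(1)(b) = (b/a)^(n+1) F_n(a)/F_n(b), both ratios in the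
   theorem carry the factor (R'/R)^(n+1).  An elementary perturbation lemma
   bounds F(a)/F(b) - F(c)/F(d) by the alternating sum of the quadratic terms,
   -(ks^2 - kp^2)(R^2 - R'^2)/(2(2n-1)) = O(1/n), plus O(1/n^2) errors.  The
   case j = 2 follows by complex conjugation. *)

Ltac Ceq := apply injective_projections; cbn [fst snd Cplus Cmult Copp Cminus RtoC Ci Cpow]; ring.

Definition Cder (f : R -> C) (t : R) (l : C) :=
  is_derive (fun s => fst (f s)) t (fst l) /\ is_derive (fun s => snd (f s)) t (snd l).

Lemma Cder_ext f g t l : (forall s, f s = g s) -> Cder f t l -> Cder g t l.
Proof.
  intros E [H1 H2]; split.
  - eapply is_derive_ext; [|exact H1]; intros s; simpl; now rewrite E.
  - eapply is_derive_ext; [|exact H2]; intros s; simpl; now rewrite E.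
Qed.

Lemma Cder_eq f t l l' : l = l' -> Cder f t l -> Cder f t l'.
Proof. now intros ->. Qed.

Lemma Cder_plus f g t a b : Cder f t a -> Cder g t b ->
  Cder (fun s => Cplus (f s) (g s)) t (Cplus a b).
Proof.
  intros [A1 A2] [B1 B2]; split.
  - exact (is_derive_plus (fun s => fst (f s)) (fun s => fst (g s)) _ _ _ A1 B1).
  - exact (is_derive_plus (fun s => snd (f s)) (fun s => snd (g s)) _ _ _ A2 B2).
Qed.

Lemma Cder_minus f g t a b : Cder f t a -> Cder g t b ->
  Cder (fun s => Cminus (f s) (g s)) t (Cminus a b).
Proof.
  intros [A1 A2] [B1 B2]; split.
  - exact (is_derive_minus (fun s => fst (f s)) (fun s => fst (g s)) _ _ _ A1 B1).
  - exact (is_derive_minus (fun s => snd (f s)) (fun s => snd (g s)) _ _ _ A2 B2).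
Qed.

Lemma Cder_mult f g t a b : Cder f t a -> Cder g t b ->
  Cder (fun s => Cmult (f s) (g s)) t (Cplus (Cmult a (g t)) (Cmult (f t) b)).
Proof.
  intros [A1 A2] [B1 B2].
  pose proof (fun u v du dv (Du : is_derive u t du) (Dv : is_derive v t dv) =>
    is_derive_mult u v t du dv Du Dv (fun x y => Rmult_comm x y)) as Dm.
  split.
  - pose proof (is_derive_minus _ _ t _ _ (Dm _ _ _ _ A1 B1) (Dm _ _ _ _ A2 B2)) as K.
    replace (fst _) with (minus (plus (fst a * fst (g t)) (fst (f t) * fst b))
                                (plus (snd a * snd (g t)) (snd (f t) * snd b))).
    + exact K.
    + unfold minus, plus, opp; simpl; ring.
  - pose proof (is_derive_plus _ _ t _ _ (Dm _ _ _ _ A1 B2) (Dm _ _ _ _ A2 B1)) as K.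
    replace (snd _) with (plus (plus (fst a * snd (g t)) (fst (f t) * snd b))
                               (plus (snd a * fst (g t)) (snd (f t) * fst b))).
    + exact K.
    + unfold plus; simpl; ring.
Qed.

Lemma Cder_const (c : C) t : Cder (fun _ => c) t 0.
Proof. split; [exact (is_derive_const (fst c) t)|exact (is_derive_const (snd c) t)]. Qed.

Lemma Cder_RtoC (r : R -> R) t dr : is_derive r t dr -> Cder (fun s => RtoC (r s)) t (RtoC dr).
Proof. intros H; split; [exact H|exact (is_derive_const 0 t)]. Qed.

Lemma Cder_cexpi t : Cder cexpi t (Cmult Ci (cexpi t)).
Proof.
  split; simpl.
  - replace (0 * cos t - 1 * sin t) with (- sin t) by ring. apply is_derive_cos.
  - replace (0 * sin t + 1 * cos t) with (cos t) by ring. apply is_derive_sin.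
Qed.

Lemma Cder_sum_n (f : nat -> R -> C) (l : nat -> C) t n :
  (forall k, Cder (f k) t (l k)) ->
  Cder (fun s => sum_n (fun k => f k s) n) t (sum_n l n).
Proof.
  intros H; induction n as [|n IH].
  - rewrite sum_O. apply (Cder_ext (f 0%nat)); [intros s; now rewrite sum_O|auto].
  - rewrite sum_Sn. apply (Cder_ext (fun s => Cplus (sum_n (fun k => f k s) n) (f (S n) s))).
    + intros s; now rewrite sum_Sn.
    + now apply Cder_plus.
Qed.

(* Mean-value inequality for complex curves: a derivative bounded by [D]
   on [-|y|, |y|] gives an increment bounded by [2 D |y|]
   (each real component contributes [D |y|], and [sqrt 2 <= 2]). *)
Lemma Cmod_mean_value (f f' : R -> C) (D y : R) :
  (forall t, Rabs t <= Rabs y -> Cder f t (f' t) /\ Cmod (f' t) <= D) ->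
  Cmod (Cminus (f y) (f 0)) <= 2 * D * Rabs y.
Proof.
  intros H.
  assert (H1 : Rabs (fst (f y) - fst (f 0)) <= D * Rabs (y - 0)).
  { apply (bounded_variation (fun s => fst (f s)) (fun t => fst (f' t))). intros t Ht.
    rewrite !Rminus_0_r in Ht. destruct (H t Ht) as [[d1 d2] b]; split; auto.
    eapply Rle_trans; [|exact b]. eapply Rle_trans; [|apply Rmax_Cmod]. apply Rmax_l. }
  assert (H2 : Rabs (snd (f y) - snd (f 0)) <= D * Rabs (y - 0)).
  { apply (bounded_variation (fun s => snd (f s)) (fun t => snd (f' t))). intros t Ht.
    rewrite !Rminus_0_r in Ht. destruct (H t Ht) as [[d1 d2] b]; split; auto.
    eapply Rle_trans; [|exact b]. eapply Rle_trans; [|apply Rmax_Cmod]. apply Rmax_r. }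
  rewrite Rminus_0_r in H1, H2.
  eapply Rle_trans; [apply Cmod_2Rmax|]. simpl.
  assert (sqrt 2 <= 2).
  { rewrite <- (sqrt_square 2) at 2 by lra. apply sqrt_le_1_alt. lra. }
  assert (Hm : Rmax (Rabs (fst (f y) - fst (f 0))) (Rabs (snd (f y) - snd (f 0))) <= D * Rabs y)
    by (apply Rmax_lub; auto).
  assert (0 <= Rmax (Rabs (fst (f y) - fst (f 0))) (Rabs (snd (f y) - snd (f 0))))
    by (eapply Rle_trans; [apply Rabs_pos| apply Rmax_l]).
  unfold Rminus in *. nra.
Qed.

Definition alpha (n k : nat) : R :=
  INR (fact (n + k)) / (INR (fact k) * INR (fact (n - k)) * 2 ^ k).

(* Positivity, so that the normalising constants [P_n(0)] never vanish. *)
Lemma alpha_pos n k : 0 < alpha n k.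
Proof.
  unfold alpha. apply Rdiv_lt_0_compat; [apply lt_0_INR, lt_O_fact|].
  repeat apply Rmult_lt_0_compat; try apply lt_0_INR, lt_O_fact. apply pow_lt; lra.
Qed.

Lemma alpha_0 n : alpha n 0 = 1.
Proof.
  unfold alpha. rewrite Nat.add_0_r, Nat.sub_0_r. simpl. field. apply INR_fact_neq_0.
Qed.

Lemma alpha_rec p K : (K < p)%nat ->
  alpha (S p) (S K) = INR (S p - K) * alpha (S p) K + alpha p (S K).
Proof.
  intros HK. destruct (Nat.le_exists_sub (S K) p HK) as [q [-> _]]. unfold alpha.
  replace (S (q + S K) + S K)%nat with (S (S (S (2*K + q))))%nat by lia.
  replace (S (q + S K) - S K)%nat with (S q) by lia.
  replace (S (q + S K) + K)%nat with (S (S (2*K+q)))%nat by lia.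
  replace (S (q + S K) - K)%nat with (S (S q)) by lia.
  replace (q + S K + S K)%nat with (S (S (2*K+q)))%nat by lia.
  replace (q + S K - S K)%nat with q by lia.
  rewrite !fact_simpl, !mult_INR, !S_INR, !plus_INR, !mult_INR. simpl.
  pose proof (INR_fact_neq_0 (2*K+q)). pose proof (INR_fact_neq_0 K).
  pose proof (INR_fact_neq_0 q). pose proof (pos_INR K). pose proof (pos_INR q).
  assert (2 ^ K <> 0) by (apply pow_nonzero; lra).
  simpl in *. field. repeat split; try lra; auto.
Qed.

Lemma alpha_top p : alpha (S p) p = alpha (S p) (S p).
Proof.
  unfold alpha.
  replace (S p + S p)%nat with (S (S (p + p))) by lia.
  replace (S p + p)%nat with (S (p + p)) by lia.
  replace (S p - S p)%nat with 0%nat by lia.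
  replace (S p - p)%nat with 1%nat by lia.
  change (fact 0) with 1%nat. change (fact 1) with 1%nat.
  rewrite !fact_simpl, !mult_INR, !S_INR, !plus_INR. change (INR 1) with 1. change (INR 0) with 0.
  pose proof (INR_fact_neq_0 (p + p)). pose proof (INR_fact_neq_0 p). pose proof (pos_INR p).
  assert (2 ^ p <> 0) by (apply pow_nonzero; lra).
  simpl pow. field. repeat split; try lra; auto.
Qed.

(* Diagonal coefficients: [alpha n n = (2n-1)!!]. *)
Lemma alpha_diag p : alpha (S p) (S p) = (2 * INR p + 1) * alpha p p.
Proof.
  unfold alpha.
  replace (S p + S p)%nat with (S (S (p + p))) by lia.
  rewrite !Nat.sub_diag. change (fact 0) with 1%nat.
  rewrite !fact_simpl, !mult_INR, !S_INR, !plus_INR. change (INR 1) with 1. change (INR 0) with 0.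
  pose proof (INR_fact_neq_0 (p + p)). pose proof (INR_fact_neq_0 p). pose proof (pos_INR p).
  assert (2 ^ p <> 0) by (apply pow_nonzero; lra).
  simpl pow. field. repeat split; try lra; auto.
Qed.

Definition coef (n k : nat) : C := Cmult (Cpow Ci k) (RtoC (alpha n k)).

Lemma Cpow_unimodular_nz (z : C) k : Cmod z = 1 -> Cpow z k <> 0%C.
Proof.
  intros Hz E. apply (f_equal Cmod) in E.
  rewrite Cmod_pow, Hz, pow1, Cmod_0 in E. lra.
Qed.

Lemma RtoC_nz r : r <> 0 -> RtoC r <> 0%C.
Proof. intros H E. apply H. now injection E. Qed.

Lemma coef_nz n k : coef n k <> 0%C.
Proof.
  unfold coef. intros E. apply (f_equal Cmod) in E.
  rewrite Cmod_mult, Cmod_pow, Cmod_Ci, pow1, Cmod_R, Cmod_0 in E.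
  pose proof (alpha_pos n k). rewrite Rabs_pos_eq in E; lra.
Qed.

Lemma coef_0 n : coef n 0 = 1%C.
Proof. unfold coef. rewrite alpha_0. Ceq. Qed.

Lemma coef_rec p K : (K < p)%nat ->
  Cplus (Cmult Ci (coef (S p) (S K))) (Cmult (RtoC (INR (S p - K))) (coef (S p) K))
  = Cmult Ci (coef p (S K)).
Proof. intros HK. unfold coef. rewrite (alpha_rec p K HK). Ceq. Qed.

Lemma coef_top p : Cplus (coef (S p) p) (Cmult Ci (coef (S p) (S p))) = 0%C.
Proof. unfold coef. rewrite <- alpha_top. Ceq. Qed.

Lemma coef_diag_ratio p :
  Cdiv (Cmult Ci (coef p p)) (coef (S p) (S p)) = RtoC (/ (2 * INR p + 1)).
Proof.
  assert (Hp : 2 * INR p + 1 <> 0) by (pose proof (pos_INR p); lra).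
  pose proof (Cpow_unimodular_nz Ci p Cmod_Ci).
  assert (RtoC (alpha p p) <> 0%C) by (apply RtoC_nz; pose proof (alpha_pos p p); lra).
  assert (RtoC (2 * INR p + 1) <> 0%C) by (apply RtoC_nz; auto).
  unfold coef. rewrite alpha_diag. simpl Cpow. rewrite RtoC_inv, RtoC_mult by auto.
  field. repeat split; auto. apply Ci_nz.
Qed.

Lemma sum_n_Cplus (u v : nat -> C) n :
  sum_n (fun k => Cplus (u k) (v k)) n = Cplus (sum_n u n) (sum_n v n).
Proof. exact (sum_n_plus u v n). Qed.

Lemma sum_n_Cmult_l (a : C) (u : nat -> C) n :
  sum_n (fun k => Cmult a (u k)) n = Cmult a (sum_n u n).
Proof. exact (sum_n_mult_l a u n). Qed.

Definition term (n k : nat) (t : R) : C := Cmult (coef n k) (RtoC (t ^ (n - k))).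
Definition dterm (n k : nat) (t : R) : C :=
  Cmult (coef n k) (RtoC (INR (n - k) * t ^ pred (n - k))).
Definition Pn (n : nat) (t : R) : C := sum_n (fun k => term n k t) n.
Definition dPn (n : nat) (t : R) : C := sum_n (fun k => dterm n k t) n.

Lemma Cder_Pn n t : Cder (Pn n) t (dPn n t).
Proof.
  apply (Cder_sum_n (fun k s => term n k s)). intros k.
  eapply Cder_eq; [|apply (Cder_mult (fun _ => coef n k) (fun s => RtoC (s ^ (n - k))))].
  3: { apply Cder_RtoC.
       eapply is_derive_ext; [|apply (is_derive_pow (fun x => x) (n - k) t 1)].
       - reflexivity.
       - exact (is_derive_id (K := R_AbsRing) t). }
  2: apply Cder_const.
  unfold dterm. Ceq.
Qed.

Lemma term_rec p K t : (K < p)%nat ->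
  Cplus (dterm (S p) K t) (Cmult Ci (term (S p) (S K) t))
  = Cmult (Cmult Ci (RtoC t)) (term p (S K) t).
Proof.
  intros HK. unfold dterm, term.
  replace (pred (S p - K)) with (S (p - S K)) by lia.
  replace (S p - S K)%nat with (S (p - S K)) by lia.
  transitivity (Cmult (Cplus (Cmult Ci (coef (S p) (S K))) (Cmult (RtoC (INR (S p - K))) (coef (S p) K)))
                      (RtoC (t ^ S (p - S K)))); [Ceq|].
  rewrite (coef_rec p K HK). simpl pow. Ceq.
Qed.

Lemma term_top p t :
  Cplus (Cplus (dterm (S p) p t) (Cmult Ci (term (S p) (S p) t))) (dterm (S p) (S p) t) = 0%C.
Proof.
  unfold dterm, term. rewrite Nat.sub_diag. replace (S p - p)%nat with 1%nat by lia.
  rewrite <- (coef_top p). simpl. Ceq.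
Qed.

Lemma Pn_identity_partial p t K : (K <= p)%nat ->
  sum_n (fun k => Cplus (Cmult Ci (term (S p) k t)) (dterm (S p) k t)) K
  = Cplus (sum_n (fun k => Cmult (Cmult Ci (RtoC t)) (term p k t)) K) (dterm (S p) K t).
Proof.
  induction K as [|K IH]; intros HK.
  - rewrite !sum_O. unfold term. rewrite !coef_0, !Nat.sub_0_r. simpl pow. Ceq.
  - rewrite !sum_Sn, IH by lia. rewrite <- (term_rec p K t) by lia.
    change plus with Cplus. Ceq.
Qed.

Lemma Pn_identity p t :
  Cplus (Cmult Ci (Pn (S p) t)) (dPn (S p) t) = Cmult (Cmult Ci (RtoC t)) (Pn p t).
Proof.
  assert (E1 : Cplus (Cmult Ci (Pn (S p) t)) (dPn (S p) t)
    = sum_n (fun k => Cplus (Cmult Ci (term (S p) k t)) (dterm (S p) k t)) (S p))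
    by (unfold Pn, dPn; now rewrite sum_n_Cplus, sum_n_Cmult_l).
  assert (E2 : Cmult (Cmult Ci (RtoC t)) (Pn p t)
    = sum_n (fun k => Cmult (Cmult Ci (RtoC t)) (term p k t)) p)
    by (unfold Pn; now rewrite sum_n_Cmult_l).
  rewrite E1, E2, sum_Sn, Pn_identity_partial by lia.
  pose proof (term_top p t) as Z. change plus with Cplus.
  revert Z. generalize (dterm (S p) p t) (term (S p) (S p) t) (dterm (S p) (S p) t).
  intros a b c Z. set (s := sum_n _ p).
  transitivity (Cplus s (Cplus (Cplus a (Cmult Ci b)) c)); [ring|rewrite Z; ring].
Qed.

Definition Fn (n : nat) (t : R) : C := Cdiv (Cmult (cexpi t) (Pn n t)) (coef n n).

Lemma Cder_Fn p t : Cder (Fn (S p)) t (Cmult (RtoC (t / (2 * INR p + 1))) (Fn p t)).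
Proof.
  unfold Fn, Cdiv.
  eapply Cder_eq; [|apply (Cder_mult (fun s => Cmult (cexpi s) (Pn (S p) s))
                       (fun _ => Cinv (coef (S p) (S p))));
                    [apply (Cder_mult _ _ _ _ _ (Cder_cexpi t) (Cder_Pn (S p) t))
                    |apply Cder_const]].
  pose proof (Pn_identity p t) as E. pose proof (coef_diag_ratio p) as Q. unfold Cdiv in Q.
  pose proof (coef_nz p p). pose proof (coef_nz (S p) (S p)).
  unfold Rdiv. rewrite RtoC_mult, <- Q.
  transitivity (Cmult (Cmult (cexpi t) (Cplus (Cmult Ci (Pn (S p) t)) (dPn (S p) t)))
                      (Cinv (coef (S p) (S p)))); [ring|].
  rewrite E. field. auto.
Qed.

(* Only the last term of [P_n] survives at the origin. *)
Lemma Pn_at_0 n : Pn n 0 = coef n n.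
Proof.
  unfold Pn. destruct n as [|p].
  - rewrite sum_O. unfold term. simpl pow. Ceq.
  - rewrite sum_Sn.
    assert (Z : forall m, (m <= p)%nat -> sum_n (fun k => term (S p) k 0) m = RtoC 0 :> C).
    { induction m as [|m IH]; intros Hm.
      - rewrite sum_O. unfold term. simpl pow. Ceq.
      - rewrite sum_Sn, IH by lia. change plus with Cplus. unfold term.
        replace (S p - S m)%nat with (S (p - S m)) by lia. simpl pow. Ceq. }
    rewrite Z by lia. change plus with Cplus. unfold term. rewrite Nat.sub_diag. simpl pow. Ceq.
Qed.

Lemma Fn_at_0 n : Fn n 0 = 1%C.
Proof.
  unfold Fn. rewrite Pn_at_0.
  assert (E : cexpi 0 = 1%C) by (unfold cexpi; now rewrite cos_0, sin_0). rewrite E.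
  pose proof (coef_nz n n). field. auto.
Qed.

Lemma Fn_order_0 t : Fn 0 t = cexpi t.
Proof. unfold Fn, Pn. rewrite sum_O. unfold term. simpl pow. rewrite coef_0. field. Qed.

Lemma Cmod_cexpi t : Cmod (cexpi t) = 1.
Proof.
  unfold Cmod, cexpi. cbn [fst snd].
  replace (cos t ^ 2 + sin t ^ 2) with 1 by (pose proof (sin2_cos2 t); unfold Rsqr in *; lra).
  apply sqrt_1.
Qed.

Lemma Cmod_le_1_plus (z : C) : Cmod z <= 1 + Cmod (Cminus z 1).
Proof.
  replace z with (Cplus 1 (Cminus z 1)) at 1 by ring.
  eapply Rle_trans; [apply Cmod_triangle|]. rewrite Cmod_1. lra.
Qed.

Lemma Fn_step_bound p X Bp : (forall t, Rabs t <= X -> Cmod (Fn p t) <= Bp) ->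
  forall y, Rabs y <= X -> Cmod (Cminus (Fn (S p) y) 1) <= 2 * X * X * Bp / (2 * INR p + 1).
Proof.
  intros HB y Hy.
  assert (Hp : 0 < 2 * INR p + 1) by (pose proof (pos_INR p); lra).
  assert (HX : 0 <= X) by (eapply Rle_trans; [apply Rabs_pos|exact Hy]).
  assert (HB0 : 0 <= Bp).
  { eapply Rle_trans; [apply Cmod_ge_0|apply HB]. rewrite Rabs_R0; auto. }
  rewrite <- (Fn_at_0 (S p)).
  eapply Rle_trans; [apply (Cmod_mean_value (Fn (S p))
    (fun t => Cmult (RtoC (t / (2 * INR p + 1))) (Fn p t)) (X * Bp / (2 * INR p + 1)))|].
  - intros t Ht. split; [apply Cder_Fn|].
    rewrite Cmod_mult, Cmod_R, Rabs_div, (Rabs_pos_eq (2 * INR p + 1)) by lra.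
    assert (Rabs t <= X) by lra. pose proof (HB t H). pose proof (Rabs_pos t).
    pose proof (Cmod_ge_0 (Fn p t)).
    replace (Rabs t / (2 * INR p + 1) * Cmod (Fn p t))
      with (Rabs t * Cmod (Fn p t) / (2 * INR p + 1)) by (field; lra).
    apply Rmult_le_compat_r; [left; apply Rinv_0_lt_compat; lra|]. now apply Rmult_le_compat.
  - replace (2 * X * X * Bp / (2 * INR p + 1)) with (2 * (X * Bp / (2 * INR p + 1)) * X)
      by (field; lra).
    apply Rmult_le_compat_l; auto.
    apply Rmult_le_pos; [lra|]. apply Rmult_le_pos; [nra|]. left; apply Rinv_0_lt_compat; lra.
Qed.

(* The bounds on [F_m] over [-X, X] produced by iterating [Fn_step_bound]. *)
Fixpoint Fbound (X : R) (m : nat) : R :=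
  match m with
  | O => 1
  | S p => 1 + 2 * X * X * Fbound X p / (2 * INR p + 1)
  end.

Lemma Fbound_ge_1 X m : 1 <= Fbound X m.
Proof.
  induction m as [|m IH]; simpl; [lra|].
  assert (0 <= 2 * X * X * Fbound X m / (2 * INR m + 1)); [|lra].
  apply Rmult_le_pos; [nra|]. left; apply Rinv_0_lt_compat. pose proof (pos_INR m); lra.
Qed.

Lemma Fn_le_Fbound X m t : Rabs t <= X -> Cmod (Fn m t) <= Fbound X m.
Proof.
  revert t; induction m as [|m IH]; intros t Ht.
  - rewrite Fn_order_0, Cmod_cexpi. simpl; lra.
  - eapply Rle_trans; [apply Cmod_le_1_plus|]. simpl Fbound.
    apply Rplus_le_compat_l. now apply (Fn_step_bound m X).
Qed.

(* [Fbound] grows at most geometrically, and once [4 X^2 <= 2m+1] the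
   recursion contracts ([Fbound (m+1) <= 1 + Fbound m / 2]); hence it is bounded. *)
Lemma Fbound_bounded X : exists B, forall m, Fbound X m <= B.
Proof.
  set (g := 1 + 2 * X * X).
  assert (Hg : 1 <= g) by (unfold g; nra).
  assert (Hgrowth : forall m, Fbound X m <= g ^ m).
  { induction m as [|m IH]; simpl; [lra|].
    pose proof (Fbound_ge_1 X m). pose proof (pos_INR m).
    assert (2 * X * X * Fbound X m / (2 * INR m + 1) <= 2 * X * X * Fbound X m).
    { apply Rmult_le_reg_r with (2 * INR m + 1); [lra|].
      field_simplify; [|lra].
      assert (0 <= X ^ 2 * Fbound X m * INR m) by (apply Rmult_le_pos; nra). lra. }
    assert (2 * X * X * Fbound X m <= 2 * X * X * g ^ m) by (apply Rmult_le_compat_l; nra).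
    replace (g * g ^ m) with (g ^ m + 2 * X * X * g ^ m) by (unfold g; ring). lra. }
  destruct (INR_unbounded (2 * X * X)) as [m0 Hm0].
  exists (2 + g ^ m0).
  assert (Hpow : 0 < g ^ m0) by (apply pow_lt; lra).
  assert (Htail : forall k, Fbound X (m0 + k) <= 2 + g ^ m0).
  { induction k as [|k IH].
    - rewrite Nat.add_0_r. pose proof (Hgrowth m0). lra.
    - rewrite Nat.add_succ_r. simpl Fbound.
      assert (INR m0 <= INR (m0 + k)) by (apply le_INR; lia).
      pose proof (Fbound_ge_1 X (m0 + k)).
      assert (2 * X * X * Fbound X (m0 + k) / (2 * INR (m0 + k) + 1) <= Fbound X (m0 + k) / 2).
      { apply Rmult_le_reg_r with (2 * (2 * INR (m0 + k) + 1)); [pose proof (pos_INR m0); lra|].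
        field_simplify; [|pose proof (pos_INR m0); lra]. nra. }
      lra. }
  intros m. destruct (Nat.le_gt_cases m0 m) as [Hm|Hm].
  - replace m with (m0 + (m - m0))%nat by lia. apply Htail.
  - eapply Rle_trans; [apply Hgrowth|]. apply Rle_trans with (g ^ m0); [|lra].
    apply Rle_pow; [lra|lia].
Qed.

Lemma Fn_uniform_bound X : exists B, 1 <= B /\ forall m t, Rabs t <= X -> Cmod (Fn m t) <= B.
Proof.
  destruct (Fbound_bounded X) as [B HB]. exists B. split.
  - eapply Rle_trans; [apply (Fbound_ge_1 X 0)|apply HB].
  - intros m t Ht. eapply Rle_trans; [apply (Fn_le_Fbound X m t Ht)|apply HB].
Qed.

Lemma Fn_second_order X B p t : 0 <= X ->
  (forall s, Rabs s <= X -> Cmod (Fn p s) <= B) -> Rabs t <= X ->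
  Cmod (Cminus (Fn (S (S p)) t) (RtoC (1 + t ^ 2 / (2 * (2 * INR p + 3)))))
  <= 4 * X ^ 4 * B / ((2 * INR p + 3) * (2 * INR p + 1)).
Proof.
  intros HX HB Ht.
  assert (Hp1 : 0 < 2 * INR p + 1) by (pose proof (pos_INR p); lra).
  assert (Hp3 : 0 < 2 * INR p + 3) by (pose proof (pos_INR p); lra).
  assert (HB0 : 0 <= B).
  { eapply Rle_trans; [apply Cmod_ge_0|apply (HB 0)]. rewrite Rabs_R0; auto. }
  set (g := fun s => Cminus (Fn (S (S p)) s) (RtoC (1 + s ^ 2 / (2 * (2 * INR p + 3))))).
  (* [g' = t/(2p+3) (F_(p+1) - 1)], which is [O(X^3 B / p^2)] by [Fn_step_bound]. *)
  assert (Hg' : forall s, Cder g s (Cmult (RtoC (s / (2 * INR p + 3))) (Cminus (Fn (S p) s) 1))).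
  { intros s. unfold g.
    eapply Cder_eq; [|apply Cder_minus; [apply Cder_Fn|apply Cder_RtoC]].
    2: { auto_derive; [auto|reflexivity]. }
    rewrite S_INR. replace (2 * (INR p + 1) + 1) with (2 * INR p + 3) by ring.
    destruct (Fn (S p) s) as [a b]. apply injective_projections; simpl; field; lra. }
  assert (g0 : g 0 = 0%C).
  { unfold g. rewrite Fn_at_0. apply injective_projections; simpl; field; lra. }
  change (Cmod (g t) <= 4 * X ^ 4 * B / ((2 * INR p + 3) * (2 * INR p + 1))).
  replace (g t) with (Cminus (g t) (g 0)) by (rewrite g0; ring).
  set (D := X * (2 * X * X * B / (2 * INR p + 1)) / (2 * INR p + 3)).
  assert (HD : 0 <= D).
  { unfold D. apply Rmult_le_pos; [|left; apply Rinv_0_lt_compat; lra].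
    apply Rmult_le_pos; [lra|]. apply Rmult_le_pos; [nra|left; apply Rinv_0_lt_compat; lra]. }
  eapply Rle_trans; [apply (Cmod_mean_value g
    (fun s => Cmult (RtoC (s / (2 * INR p + 3))) (Cminus (Fn (S p) s) 1)) D)|].
  - intros s Hs. split; [apply Hg'|].
    rewrite Cmod_mult, Cmod_R, Rabs_div, (Rabs_pos_eq (2 * INR p + 3)) by lra.
    assert (Hs' : Rabs s <= X) by lra.
    pose proof (Fn_step_bound p X B HB s Hs'). pose proof (Rabs_pos s).
    pose proof (Cmod_ge_0 (Cminus (Fn (S p) s) 1)).
    replace (Rabs s / (2 * INR p + 3) * Cmod (Cminus (Fn (S p) s) 1))
      with (Rabs s * Cmod (Cminus (Fn (S p) s) 1) / (2 * INR p + 3)) by (field; lra).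
    apply Rmult_le_compat_r; [left; apply Rinv_0_lt_compat; lra|]. now apply Rmult_le_compat.
  - replace (4 * X ^ 4 * B / ((2 * INR p + 3) * (2 * INR p + 1))) with (2 * D * X)
      by (unfold D; field; lra).
    apply Rmult_le_compat_l; lra.
Qed.

(* The quadratic Taylor coefficient of [F_n] at [x], as a function of [m = n]. *)
Definition quad (m x : R) : R := x ^ 2 / (2 * (2 * m - 1)).

Lemma Fn_expansion X B n x : 0 <= X -> (2 <= n)%nat ->
  (forall m s, Rabs s <= X -> Cmod (Fn m s) <= B) -> Rabs x <= X ->
  Cmod (Cminus (Fn n x) (RtoC (1 + quad (INR n) x)))
  <= 4 * X ^ 4 * B / ((2 * INR n - 1) * (2 * INR n - 3)).
Proof.
  intros HX Hn HB Hx. destruct n as [|[|p]]; [lia|lia|].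
  unfold quad. rewrite !S_INR.
  replace (2 * (INR p + 1 + 1) - 1) with (2 * INR p + 3) by ring.
  replace (2 * (INR p + 1 + 1) - 3) with (2 * INR p + 1) by ring.
  apply Fn_second_order; auto.
Qed.

Lemma quad_bounds m X x : 1 < m -> X ^ 2 <= 2 * (2 * m - 1) -> Rabs x <= X ->
  0 <= quad m x <= 1.
Proof.
  intros Hm HX Hx. unfold quad.
  assert (x ^ 2 <= X ^ 2)
    by (rewrite <- (pow2_abs x); apply pow_incr; split; [apply Rabs_pos|auto]).
  split.
  - apply Rdiv_le_0_compat; [apply pow2_ge_0|lra].
  - apply Rmult_le_reg_r with (2 * (2 * m - 1)); [lra|]. field_simplify; lra.
Qed.

Lemma hankel1_Fn n x : 0 < x ->
  sph_hankel1 n x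
  = Cmult (Cmult (Cpow (Copp Ci) (S n)) (RtoC (/ x ^ S n))) (Cmult (coef n n) (Fn n x)).
Proof.
  intros Hx. unfold sph_hankel1.
  assert (E : sum_n (fun k => Cmult (Cpow Ci k) (RtoC (INR (fact (n + k)) /
                (INR (fact k) * INR (fact (n - k)) * (2 * x) ^ k)))) n
              = Cmult (RtoC (/ x ^ n)) (Pn n x)).
  { unfold Pn. rewrite <- sum_n_Cmult_l. apply sum_n_ext_loc. intros k Hk.
    unfold term, coef, alpha.
    replace (INR (fact (n + k)) / (INR (fact k) * INR (fact (n - k)) * (2 * x) ^ k))
      with (/ x ^ n * (INR (fact (n + k)) / (INR (fact k) * INR (fact (n - k)) * 2 ^ k)
                       * x ^ (n - k))).
    - Ceq.
    - rewrite Rpow_mult_distr.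
      replace (x ^ n) with (x ^ (n - k) * x ^ k) by (rewrite <- pow_add; f_equal; lia).
      pose proof (INR_fact_neq_0 (n + k)). pose proof (INR_fact_neq_0 k).
      pose proof (INR_fact_neq_0 (n - k)).
      assert (x ^ k <> 0) by (apply pow_nonzero; lra).
      assert (x ^ (n - k) <> 0) by (apply pow_nonzero; lra).
      assert (2 ^ k <> 0) by (apply pow_nonzero; lra).
      field. repeat split; auto. }
  rewrite E. unfold Fn.
  replace (/ x ^ S n) with (/ x * / x ^ n) by (simpl; field; split; [apply pow_nonzero|]; lra).
  rewrite RtoC_mult. pose proof (coef_nz n n). field. auto.
Qed.

Lemma hankel1_nz n x : 0 < x -> Fn n x <> 0%C -> sph_hankel1 n x <> 0%C.
Proof.
  intros Hx HF E. rewrite hankel1_Fn in E by auto.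
  apply (f_equal Cmod) in E.
  rewrite !Cmod_mult, Cmod_pow, Cmod_opp, Cmod_Ci, pow1, Cmod_R, Cmod_0 in E.
  assert (0 < Cmod (coef n n)) by (apply Cmod_gt_0, coef_nz).
  assert (0 < Cmod (Fn n x)) by (apply Cmod_gt_0; auto).
  assert (0 < / x ^ S n) by (apply Rinv_0_lt_compat, pow_lt; auto).
  rewrite Rabs_pos_eq in E by lra.
  assert (0 < 1 * / x ^ S n * (Cmod (coef n n) * Cmod (Fn n x))) by
    (apply Rmult_lt_0_compat; [lra|]; apply Rmult_lt_0_compat; auto).
  lra.
Qed.

Lemma hankel1_ratio n a b : 0 < a -> 0 < b -> Fn n b <> 0%C ->
  Cdiv (sph_hankel1 n a) (sph_hankel1 n b)
  = Cmult (RtoC ((b / a) ^ S n)) (Cdiv (Fn n a) (Fn n b)).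
Proof.
  intros Ha Hb HF. rewrite !hankel1_Fn by auto.
  assert (a ^ S n <> 0) by (apply pow_nonzero; lra).
  assert (b ^ S n <> 0) by (apply pow_nonzero; lra).
  replace ((b / a) ^ S n) with (/ a ^ S n * / / b ^ S n)
    by (unfold Rdiv; rewrite Rpow_mult_distr, pow_inv; field; auto).
  rewrite RtoC_mult, (RtoC_inv (/ b ^ S n)) by (apply Rinv_neq_0_compat; auto).
  pose proof (Cpow_unimodular_nz (Copp Ci) (S n) ltac:(now rewrite Cmod_opp, Cmod_Ci)).
  pose proof (coef_nz n n).
  assert (RtoC (/ b ^ S n) <> 0%C) by (apply RtoC_nz, Rinv_neq_0_compat; auto).
  field. repeat split; auto.
Qed.

(* For real arguments [h_n^(2)] is the conjugate of [h_n^(1)], so differences of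
   ratios have the same modulus for [j = 1] and [j = 2]. *)
Lemma hankel_ratio_diff_conj j n a b c d : (j = 1 \/ j = 2)%nat ->
  sph_hankel1 n b <> 0%C -> sph_hankel1 n d <> 0%C ->
  Cmod (Cminus (Cdiv (sph_hankel j n a) (sph_hankel j n b))
               (Cdiv (sph_hankel j n c) (sph_hankel j n d)))
  = Cmod (Cminus (Cdiv (sph_hankel1 n a) (sph_hankel1 n b))
                 (Cdiv (sph_hankel1 n c) (sph_hankel1 n d))).
Proof.
  intros [-> | ->] Hb Hd; [reflexivity|].
  unfold sph_hankel, sph_hankel2. simpl Nat.eqb. cbv iota.
  rewrite <- !Cdiv_conj, <- Cminus_conj, Cmod_conj by auto. reflexivity.
Qed.

Lemma Cmod_minus_le (x y : C) : Cmod (Cminus x y) <= Cmod x + Cmod y.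
Proof. unfold Cminus. eapply Rle_trans; [apply Cmod_triangle|]. rewrite Cmod_opp. lra. Qed.

Lemma Cmod_near_real (F : C) u d : 0 <= u -> Cmod (Cminus F (RtoC (1 + u))) <= d ->
  1 + u - d <= Cmod F.
Proof.
  intros Hu Hd.
  pose proof (Cmod_minus_le F (Cminus F (RtoC (1 + u)))) as T.
  replace (Cminus F (Cminus F (RtoC (1 + u)))) with (RtoC (1 + u)) in T by ring.
  rewrite Cmod_R, Rabs_pos_eq in T; lra.
Qed.

Lemma Cmod_near_real_nz (F : C) u d : 0 <= u -> d < 1 ->
  Cmod (Cminus F (RtoC (1 + u))) <= d -> F <> 0%C.
Proof.
  intros Hu Hd HF E. pose proof (Cmod_near_real F u d Hu HF) as L.
  rewrite E, Cmod_0 in L. lra.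
Qed.

Lemma Cmod_sum6 (t1 t2 t3 t4 t5 t6 : C) :
  Cmod (Cminus (Cminus (Cminus (Cplus (Cplus t1 t2) t3) t4) t5) t6)
  <= Cmod t1 + Cmod t2 + Cmod t3 + Cmod t4 + Cmod t5 + Cmod t6.
Proof.
  pose proof (Cmod_minus_le (Cminus (Cminus (Cplus (Cplus t1 t2) t3) t4) t5) t6).
  pose proof (Cmod_minus_le (Cminus (Cplus (Cplus t1 t2) t3) t4) t5).
  pose proof (Cmod_minus_le (Cplus (Cplus t1 t2) t3) t4).
  pose proof (Cmod_triangle (Cplus t1 t2) t3).
  pose proof (Cmod_triangle t1 t2). lra.
Qed.

Section Perturbation.
Variables (Fa Fb Fc Fd : C) (ua ub uc ud d : R).
Hypotheses (Ha : 0 <= ua <= 1) (Hb : 0 <= ub <= 1) (Hc : 0 <= uc <= 1) (Hd : 0 <= ud <= 1).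
Hypothesis (Hdd : 0 <= d <= 1/10).
Hypotheses (HA : Cmod (Cminus Fa (RtoC (1 + ua))) <= d)
           (HB : Cmod (Cminus Fb (RtoC (1 + ub))) <= d)
           (HC : Cmod (Cminus Fc (RtoC (1 + uc))) <= d)
           (HD : Cmod (Cminus Fd (RtoC (1 + ud))) <= d).

(* When [ua ud = ub uc], the cross product [Fa Fd - Fc Fb] equals
   [ua + ud - ub - uc] up to six error terms, each at most [2 d]. *)
Lemma cross_product_bound : ua * ud = ub * uc ->
  Cmod (Cminus (Cmult Fa Fd) (Cmult Fc Fb)) <= Rabs (ua + ud - ub - uc) + 12 * d.
Proof.
  intros Hu.
  set (Ea := Cminus Fa (RtoC (1 + ua))) in *. set (Eb := Cminus Fb (RtoC (1 + ub))) in *.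
  set (Ec := Cminus Fc (RtoC (1 + uc))) in *. set (Ed := Cminus Fd (RtoC (1 + ud))) in *.
  replace (Cminus (Cmult Fa Fd) (Cmult Fc Fb)) with
    (Cplus (RtoC (ua + ud - ub - uc))
      (Cminus (Cminus (Cminus (Cplus (Cplus (Cmult Ea (RtoC (1 + ud))) (Cmult (RtoC (1 + ua)) Ed))
        (Cmult Ea Ed)) (Cmult Ec (RtoC (1 + ub)))) (Cmult (RtoC (1 + uc)) Eb)) (Cmult Ec Eb))).
  2: { unfold Ea, Eb, Ec, Ed. apply injective_projections; simpl; nra. }
  eapply Rle_trans; [apply Cmod_triangle|]. rewrite Cmod_R. apply Rplus_le_compat_l.
  eapply Rle_trans; [apply Cmod_sum6|].
  rewrite !Cmod_mult, !Cmod_R, !Rabs_pos_eq by lra.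
  pose proof (Cmod_ge_0 Ea). pose proof (Cmod_ge_0 Eb).
  pose proof (Cmod_ge_0 Ec). pose proof (Cmod_ge_0 Ed).
  nra.
Qed.

Lemma ratio_perturbation : ua * ud = ub * uc ->
  Cmod (Cminus (Cdiv Fa Fb) (Cdiv Fc Fd)) <= 100 / 81 * (Rabs (ua + ud - ub - uc) + 12 * d).
Proof.
  intros Hu.
  pose proof (Cmod_near_real Fb ub d (proj1 Hb) HB) as LB.
  pose proof (Cmod_near_real Fd ud d (proj1 Hd) HD) as LD.
  pose proof (Cmod_near_real_nz Fb ub d (proj1 Hb) ltac:(lra) HB).
  pose proof (Cmod_near_real_nz Fd ud d (proj1 Hd) ltac:(lra) HD).
  replace (Cminus (Cdiv Fa Fb) (Cdiv Fc Fd))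
    with (Cdiv (Cminus (Cmult Fa Fd) (Cmult Fc Fb)) (Cmult Fb Fd)) by (field; auto).
  assert (Hden : 81 / 100 <= Cmod Fb * Cmod Fd) by nra.
  rewrite Cmod_div, Cmod_mult by (apply Cmult_neq_0; auto).
  pose proof (cross_product_bound Hu) as Num. pose proof (Rabs_pos (ua + ud - ub - uc)).
  apply Rle_trans with ((Rabs (ua + ud - ub - uc) + 12 * d) / (Cmod Fb * Cmod Fd)).
  - apply Rmult_le_compat_r; [left; apply Rinv_0_lt_compat; lra|exact Num].
  - replace (100 / 81 * (Rabs (ua + ud - ub - uc) + 12 * d))
      with ((Rabs (ua + ud - ub - uc) + 12 * d) * / (81 / 100)) by field.
    apply Rmult_le_compat_l; [lra|]. apply Rinv_le_contravar; lra.
Qed.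
End Perturbation.

(* The quadratic terms at [kp R0, ks R1, kp R1, ks R0] nearly cancel: their
   alternating sum is [-(ks^2 - kp^2)(R0^2 - R1^2) / (2 (2m-1)) = O(1/m)]. *)
Lemma quad_cross_bound (kp ks R0 R1 m : R) :
  0 < kp -> kp < ks -> 0 < R1 -> R1 < R0 -> 2 <= m ->
  Rabs (quad m (kp * R0) + quad m (ks * R1) - quad m (kp * R1) - quad m (ks * R0))
  <= 4 / 3 * (ks * (ks - kp) * R0 * (R0 - R1) / m).
Proof.
  intros Hkp Hks HR1 HR0 Hm. unfold quad.
  set (M := ks * (ks - kp) * R0 * (R0 - R1)).
  assert (HM : 0 < M) by (unfold M; repeat apply Rmult_lt_0_compat; lra).
  replace ((kp * R0) ^ 2 / (2 * (2 * m - 1)) + (ks * R1) ^ 2 / (2 * (2 * m - 1))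
           - (kp * R1) ^ 2 / (2 * (2 * m - 1)) - (ks * R0) ^ 2 / (2 * (2 * m - 1)))
    with (- ((ks ^ 2 - kp ^ 2) * (R0 ^ 2 - R1 ^ 2) / (2 * (2 * m - 1)))) by (field; lra).
  rewrite Rabs_Ropp, Rabs_pos_eq.
  2: { apply Rmult_le_pos; [apply Rmult_le_pos; nra|left; apply Rinv_0_lt_compat; lra]. }
  assert (E : (ks ^ 2 - kp ^ 2) * (R0 ^ 2 - R1 ^ 2) <= 4 * M).
  { apply Rle_trans with ((2 * ks * (ks - kp)) * (2 * R0 * (R0 - R1))).
    - apply Rmult_le_compat; nra.
    - unfold M; lra. }
  apply Rle_trans with (4 * M / (2 * (2 * m - 1))).
  - apply Rmult_le_compat_r; [left; apply Rinv_0_lt_compat; lra|exact E].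
  - apply Rmult_le_reg_r with (6 * m * (2 * m - 1)); [nra|].
    field_simplify; nra.
Qed.

Lemma large_order_bounds (K M X m : R) : 0 < K -> 0 < M ->
  3 + X ^ 2 + 10 * K + 12 * K / M <= m ->
  K / ((2 * m - 1) * (2 * m - 3)) <= 1 / 10 /\
  12 * (K / ((2 * m - 1) * (2 * m - 3))) <= M / m /\
  X ^ 2 <= 2 * (2 * m - 1).
Proof.
  intros HK HM Hm.
  assert (HKM : 0 < 12 * K / M) by (apply Rdiv_lt_0_compat; lra).
  assert (HX : 0 <= X ^ 2) by apply pow2_ge_0.
  assert (Hden : m * m <= (2 * m - 1) * (2 * m - 3)) by nra.
  assert (Hsq : K / ((2 * m - 1) * (2 * m - 3)) <= K / (m * m)).
  { apply Rmult_le_compat_l; [lra|]. apply Rinv_le_contravar; nra. }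
  assert (H12 : 12 * K <= M * m).
  { replace (12 * K) with (12 * K / M * M) by (field; lra). nra. }
  repeat split.
  - eapply Rle_trans; [exact Hsq|].
    apply Rmult_le_reg_r with (m * m); [nra|]. field_simplify; nra.
  - apply Rle_trans with (12 * (K / (m * m))); [lra|].
    apply Rmult_le_reg_r with (m * m); [nra|]. field_simplify; nra.
  - nra.
Qed.

Lemma Fn_ratio_estimate (kp ks R0 R1 : R) :
  0 < kp -> kp < ks -> 0 < R1 -> R1 < R0 ->
  exists N : nat, forall n : nat, (N <= n)%nat ->
    Fn n (kp * R1) <> 0%C /\ Fn n (ks * R1) <> 0%C /\
    Cmod (Cminus (Cdiv (Fn n (kp * R0)) (Fn n (kp * R1)))
                 (Cdiv (Fn n (ks * R0)) (Fn n (ks * R1))))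
    <= 14 / 3 * (ks * (ks - kp) / INR n) * R0 * (R0 - R1).
Proof.
  intros Hkp Hks HR1 HR0.
  set (X := ks * R0).
  assert (Hpts : forall k r, 0 < k <= ks -> 0 < r <= R0 -> Rabs (k * r) <= X).
  { intros k r Hk Hr. rewrite Rabs_pos_eq by nra. unfold X. nra. }
  destruct (Fn_uniform_bound X) as [B [HB1 HB]].
  set (M := ks * (ks - kp) * R0 * (R0 - R1)).
  assert (HM : 0 < M) by (unfold M; repeat apply Rmult_lt_0_compat; lra).
  set (K := 4 * X ^ 4 * B).
  assert (HK : 0 < K) by (unfold K; assert (0 < X ^ 4) by (apply pow_lt; unfold X; nra); nra).
  destruct (INR_unbounded (3 + X ^ 2 + 10 * K + 12 * K / M)) as [N HN].
  exists N. intros n Hn.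
  pose proof (le_INR _ _ Hn) as HNn. set (m := INR n) in *.
  assert (Hm : 3 + X ^ 2 + 10 * K + 12 * K / M <= m) by lra.
  destruct (large_order_bounds K M X m HK HM Hm) as [Hsmall [Herr Hquad]].
  set (dl := K / ((2 * m - 1) * (2 * m - 3))) in *.
  assert (Hm3 : 3 <= m) by (assert (0 < 12 * K / M) by (apply Rdiv_lt_0_compat; lra);
                            pose proof (pow2_ge_0 X); lra).
  assert (Hdl : 0 <= dl) by (apply Rdiv_le_0_compat; [lra|nra]).
  assert (Hn2 : (2 <= n)%nat) by (apply INR_le; fold m; replace (INR 2) with 2 by (simpl; lra); lra).
  assert (Hu : forall x, Rabs x <= X -> 0 <= quad m x <= 1)
    by (intros x; apply quad_bounds; lra).
  assert (Hexp : forall x, Rabs x <= X -> Cmod (Cminus (Fn n x) (RtoC (1 + quad m x))) <= dl)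
    by (intros x Hx; apply (Fn_expansion X B); auto; unfold X; nra).
  pose proof (Hpts kp R0 ltac:(lra) ltac:(lra)) as Ha.
  pose proof (Hpts kp R1 ltac:(lra) ltac:(lra)) as Hb.
  pose proof (Hpts ks R0 ltac:(lra) ltac:(lra)) as Hc.
  pose proof (Hpts ks R1 ltac:(lra) ltac:(lra)) as Hd.
  split; [|split].
  - exact (Cmod_near_real_nz _ _ dl (proj1 (Hu _ Hb)) ltac:(lra) (Hexp _ Hb)).
  - exact (Cmod_near_real_nz _ _ dl (proj1 (Hu _ Hd)) ltac:(lra) (Hexp _ Hd)).
  - eapply Rle_trans; [apply (ratio_perturbation _ _ _ _ _ _ _ _ dl (Hu _ Ha) (Hu _ Hb)
                          (Hu _ Hc) (Hu _ Hd) ltac:(lra) (Hexp _ Ha) (Hexp _ Hb) (Hexp _ Hc) (Hexp _ Hd))|].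
    + unfold quad. field. lra.
    + pose proof (quad_cross_bound kp ks R0 R1 m Hkp Hks HR1 HR0 ltac:(lra)) as Hcross.
      fold M in Hcross.
      assert (0 <= M / m) by (apply Rdiv_le_0_compat; lra).
      replace (14 / 3 * (ks * (ks - kp) / m) * R0 * (R0 - R1)) with (14 / 3 * (M / m))
        by (unfold M; field; lra).
      lra.
Qed.

Theorem lemmaE5 (kp ks R0 R1 : R) :
  0 < kp -> kp < ks -> 0 < R1 -> R1 < R0 ->
  exists N : nat, forall n : nat, (N <= n)%nat ->
    forall j : nat, (j = 1 \/ j = 2)%nat ->
      Cmod (Cminus (Cdiv (sph_hankel j n (kp * R0)) (sph_hankel j n (kp * R1)))
                   (Cdiv (sph_hankel j n (ks * R0)) (sph_hankel j n (ks * R1))))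
      <= 14 / 3 * (ks * (ks - kp) / INR n) * R0 * (R0 - R1) * (R1 / R0) ^ (n + 1).
Proof.
  intros Hkp Hks HR1 HR0.
  destruct (Fn_ratio_estimate kp ks R0 R1 Hkp Hks HR1 HR0) as [N HN].
  exists N. intros n Hn j Hj.
  destruct (HN n Hn) as [Hb [Hd Hest]].
  (* Reduce to [j = 1], then factor out [(R1/R0)^(n+1)] from both ratios. *)
  rewrite hankel_ratio_diff_conj by (auto; apply hankel1_nz; auto; nra).
  rewrite !hankel1_ratio by (auto; nra).
  replace (kp * R1 / (kp * R0)) with (R1 / R0) by (field; lra).
  replace (ks * R1 / (ks * R0)) with (R1 / R0) by (field; lra).
  rewrite Nat.add_1_r.
  assert (Hr : 0 < (R1 / R0) ^ S n) by (apply pow_lt, Rdiv_lt_0_compat; lra).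
  set (r := (R1 / R0) ^ S n) in *.
  set (Y := Cdiv (Fn n (kp * R0)) (Fn n (kp * R1))) in *.
  set (Z := Cdiv (Fn n (ks * R0)) (Fn n (ks * R1))) in *.
  replace (Cminus (Cmult (RtoC r) Y) (Cmult (RtoC r) Z)) with (Cmult (RtoC r) (Cminus Y Z)) by ring.
  rewrite Cmod_mult, Cmod_R, Rabs_pos_eq, Rmult_comm by lra.
  apply Rmult_le_compat_r; lra.
Qed.
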